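(* Let $V$ be a complex normed vector space, $x=\{x_n\}_{n=1}^\infty\in l^{\infty}(V)$ and $v\in V$. If $x$ is strongly almost convergent to $v$, then $x$ is weakly almost convergent to $v$.
   Context: $\mathbb{N}=\{1,2,3,\dots\}$. $l^{\infty}(V)$ is the space of bounded sequences $x=\{x_n\}_{n=1}^\infty$ in $V$ with norm $\|x\|_\infty=\sup_n\|x_n\|_V$. For $v\in V$, $\widetilde v=\{v,v,\dots\}$. $T$ is the left shift: $T\{x_1,x_2,\dots\}=\{x_2,x_3,\dots\}$. A Banach limit functional is a bounded linear functional $L$ on $l^\infty(V)$ with $\|L\|\le1$ and $L(Tx)=L(x)$ for all $x$. A sequence $x\in l^\infty(V)$ is strongly almost convergent to $v\in V$ if $L(x)=L(\widetilde v)$ for every Banach limit functional $L$. A bounded complex sequence $\{a_n\}$ is almost convergent to $a\in\mathbb{C}$ if $\sup_{j\in\mathbb{N}}\left|\frac1n\sum_{i=0}^{n-1}a_{i+j}-a\right|\to0$ as $n\to\infty$. $x\in l^\infty(V)$ is weakly almost convergent to $v$ if for every $f\in V^*$ the scalar sequence $\{f(x_n)\}_{n=1}^\infty$ is almost convergent to $f(v)$. *)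

From Stdlib Require Import Reals.
Open Scope R_scope.

Record C := mkC { Cre : R ; Cim : R }.
Definition C0 : C := mkC 0 0.
Definition C1 : C := mkC 1 0.
Definition Cadd (a b : C) : C := mkC (Cre a + Cre b) (Cim a + Cim b).
Definition Copp (a : C) : C := mkC (- Cre a) (- Cim a).
Definition Csub (a b : C) : C := Cadd a (Copp b).
Definition Cmul (a b : C) : C :=
  mkC (Cre a * Cre b - Cim a * Cim b) (Cre a * Cim b + Cim a * Cre b).
Definition Cmod (a : C) : R := sqrt (Cre a * Cre a + Cim a * Cim a).
Definition RtoC (r : R) : C := mkC r 0.

Fixpoint Csum_from (a : nat -> C) (j n : nat) : C :=
  match n with
  | O => C0
  | S k => Cadd (Csum_from a j k) (a (k + j)%nat)
  end.

Record CNormedSpace := {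
  carrier :> Type ;
  vzero : carrier ;
  vadd : carrier -> carrier -> carrier ;
  vopp : carrier -> carrier ;
  vscal : C -> carrier -> carrier ;
  vnorm : carrier -> R ;
  vadd_assoc : forall x y z, vadd x (vadd y z) = vadd (vadd x y) z ;
  vadd_comm : forall x y, vadd x y = vadd y x ;
  vadd_0 : forall x, vadd x vzero = x ;
  vadd_opp : forall x, vadd x (vopp x) = vzero ;
  vscal_1 : forall x, vscal C1 x = x ;
  vscal_assoc : forall a b x, vscal a (vscal b x) = vscal (Cmul a b) x ;
  vscal_distr_v : forall a x y, vscal a (vadd x y) = vadd (vscal a x) (vscal a y) ;
  vscal_distr_s : forall a b x, vscal (Cadd a b) x = vadd (vscal a x) (vscal b x) ;
  vnorm_nonneg : forall x, 0 <= vnorm x ;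
  vnorm_eq0 : forall x, vnorm x = 0 -> x = vzero ;
  vnorm_scal : forall a x, vnorm (vscal a x) = Cmod a * vnorm x ;
  vnorm_triangle : forall x y, vnorm (vadd x y) <= vnorm x + vnorm y
}.

Arguments vzero {c}.
Arguments vadd {c}.
Arguments vscal {c}.
Arguments vnorm {c}.

Section Defs.
Variable V : CNormedSpace.

(* Sequences x = {x_n}_{n>=1} are represented 0-based: x k stands for x_{k+1}. *)
Definition seqV := nat -> V.

Definition bounded_seq (x : seqV) : Prop :=
  exists M, forall n, vnorm (x n) <= M.

Definition sup_norm_le (x : seqV) (M : R) : Prop :=
  forall n, vnorm (x n) <= M.

Definition const_seq (v : V) : seqV := fun _ => v.
Definition shift (x : seqV) : seqV := fun n => x (S n).
Definition seq_add (x y : seqV) : seqV := fun n => vadd (x n) (y n).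
Definition seq_scal (a : C) (x : seqV) : seqV := fun n => vscal a (x n).

(* A functional on l^∞(V); only its values on bounded sequences matter. *)
Definition banach_limit_functional (L : seqV -> C) : Prop :=
  (forall x y, bounded_seq x -> bounded_seq y ->
      L (seq_add x y) = Cadd (L x) (L y)) /\
  (forall a x, bounded_seq x -> L (seq_scal a x) = Cmul a (L x)) /\
  (* ‖L‖ ≤ 1 *)
  (forall x M, sup_norm_le x M -> Cmod (L x) <= M) /\
  (forall x, bounded_seq x -> L (shift x) = L x).

Definition strongly_almost_convergent (x : seqV) (v : V) : Prop :=
  forall L, banach_limit_functional L -> L x = L (const_seq v).

Definition dual_elem (f : V -> C) : Prop :=
  (forall u w, f (vadd u w) = Cadd (f u) (f w)) /\
  (forall a u, f (vscal a u) = Cmul a (f u)) /\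
  (exists K, forall u, Cmod (f u) <= K * vnorm u).

End Defs.

Definition almost_convergent (a : nat -> C) (l : C) : Prop :=
  (exists M, forall n, Cmod (a n) <= M) /\
  forall eps, 0 < eps -> exists N, forall n, (N <= n)%nat -> (0 < n)%nat ->
    forall j, Cmod (Csub (Cmul (RtoC (/ INR n)) (Csum_from a j n)) l) <= eps.

Definition weakly_almost_convergent (V : CNormedSpace) (x : seqV V) (v : V) : Prop :=
  forall f, dual_elem V f -> almost_convergent (fun n => f (x n)) (f v).

(* Let f be a bounded linear functional on V, with |f u| <= K ‖u‖.  Suppose the
   window averages (1/n) Σ_{i<n} f(x_{i+j}) do not converge to f(v) uniformly
   in j.  Then for every k there is a window (n_k, j_k) of length n_k >= k
   whose average stays eps away from f(v).  Fix a free ultrafilter U on ℕ and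
   put L(y) := (1/K) · U-lim_k (average of f∘y over the window (n_k, j_k)).
   L is linear, has norm at most 1, and is shift invariant because shifting y
   changes the k-th average by O(1/n_k) -> 0.  So L is a Banach limit, and strong
   almost convergence gives L(x) = L(ṽ) = f(v)/K, contradicting the choice of
   the windows. *)

From Pilot Require Import Defs.
From Stdlib Require Import Reals Lra Lia Psatz ClassicalEpsilon FunctionalExtensionality.
From Coquelicot Require Complex.
From mathcomp Require filter ssrnat.
Import Defs.
Open Scope R_scope.

Lemma C_ext (a b : C) : Cre a = Cre b -> Cim a = Cim b -> a = b.
Proof. destruct a, b; simpl; intros; subst; reflexivity. Qed.

Ltac Ceq := apply C_ext; simpl; ring.

(* Our complex numbers are Coquelicot's pairs in disguise; [toC] transports
   the modulus, so the standard facts about it can be reused. *)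
Definition toC (a : C) : Complex.C := (Cre a, Cim a).

Lemma Cmod_toC (a : C) : Cmod a = Complex.Cmod (toC a).
Proof. unfold Cmod, Complex.Cmod, toC; simpl; f_equal; ring. Qed.

Lemma Cmod_ge0 (a : C) : 0 <= Cmod a.
Proof. rewrite Cmod_toC; apply Complex.Cmod_ge_0. Qed.

Lemma Cmod_triangle (a b : C) : Cmod (Cadd a b) <= Cmod a + Cmod b.
Proof. rewrite !Cmod_toC; exact (Complex.Cmod_triangle (toC a) (toC b)). Qed.

Lemma Cmod_mul (a b : C) : Cmod (Cmul a b) = Cmod a * Cmod b.
Proof. rewrite !Cmod_toC; exact (Complex.Cmod_mult (toC a) (toC b)). Qed.

Lemma Cmod_RtoC (r : R) : Cmod (RtoC r) = Rabs r.
Proof. rewrite Cmod_toC; exact (Complex.Cmod_R r). Qed.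

Lemma Cmod_opp (a : C) : Cmod (Copp a) = Cmod a.
Proof. rewrite !Cmod_toC; exact (Complex.Cmod_opp (toC a)). Qed.

Lemma Cmod_eq0 (a : C) : Cmod a = 0 -> a = C0.
Proof.
  rewrite Cmod_toC; intro H; apply Complex.Cmod_eq_0 in H.
  apply C_ext; [apply (f_equal fst H) | apply (f_equal snd H)].
Qed.

Lemma Cmod_sub_sym (a b : C) : Cmod (Csub a b) = Cmod (Csub b a).
Proof. replace (Csub b a) with (Copp (Csub a b)) by Ceq; symmetry; apply Cmod_opp. Qed.

Lemma Cre_le (a : C) : Rabs (Cre a) <= Cmod a.
Proof. rewrite Cmod_toC; exact (Complex.re_le_Cmod (toC a)). Qed.

Lemma Cim_le (a : C) : Rabs (Cim a) <= Cmod a.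
Proof.
  rewrite Cmod_toC; eapply Rle_trans; [apply Rmax_r | exact (Complex.Rmax_Cmod (toC a))].
Qed.

Lemma Cmod_le_sum (a : C) : Cmod a <= Rabs (Cre a) + Rabs (Cim a).
Proof.
  replace a with (Cadd (RtoC (Cre a)) (Cmul (mkC 0 1) (RtoC (Cim a)))) at 1 by Ceq.
  eapply Rle_trans; [apply Cmod_triangle|].
  rewrite Cmod_mul, !Cmod_RtoC, Cmod_toC.
  change (toC (mkC 0 1)) with Complex.Ci; rewrite Complex.Cmod_Ci; lra.
Qed.

Lemma Cmul_cancel (r : R) (a b : C) : r <> 0 -> Cmul (RtoC r) a = Cmul (RtoC r) b -> a = b.
Proof.
  intros Hr E; pose proof (f_equal Cre E) as E1; pose proof (f_equal Cim E) as E2.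
  simpl in E1, E2; apply C_ext; apply (Rmult_eq_reg_l r); auto; lra.
Qed.

Lemma Csum_add (a b : nat -> C) (j n : nat) :
  Csum_from (fun i => Cadd (a i) (b i)) j n = Cadd (Csum_from a j n) (Csum_from b j n).
Proof. induction n; simpl; [Ceq | rewrite IHn; Ceq]. Qed.

Lemma Csum_scal (c : C) (a : nat -> C) (j n : nat) :
  Csum_from (fun i => Cmul c (a i)) j n = Cmul c (Csum_from a j n).
Proof. induction n; simpl; [Ceq | rewrite IHn; Ceq]. Qed.

Lemma Csum_const (c : C) (j n : nat) : Csum_from (fun _ => c) j n = Cmul (RtoC (INR n)) c.
Proof. induction n; simpl Csum_from; [simpl; Ceq | rewrite IHn, S_INR; Ceq]. Qed.

Lemma Csum_bound (a : nat -> C) (j n : nat) (M : R) :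
  (forall i, Cmod (a i) <= M) -> Cmod (Csum_from a j n) <= INR n * M.
Proof.
  intros Ha; induction n; simpl Csum_from.
  - replace C0 with (RtoC 0) by reflexivity; rewrite Cmod_RtoC, Rabs_R0; simpl; lra.
  - rewrite S_INR; eapply Rle_trans; [apply Cmod_triangle|].
    specialize (Ha (n + j)%nat); lra.
Qed.

Lemma Csum_shift (a : nat -> C) (j n : nat) :
  Csum_from (fun i => a (S i)) j n = Csub (Cadd (Csum_from a j n) (a (n + j)%nat)) (a j).
Proof. induction n; simpl; [Ceq | rewrite IHn; Ceq]. Qed.

Definition window_avg (a : nat -> C) (n j : nat) : C :=
  Cmul (RtoC (/ INR n)) (Csum_from a j n).

Lemma window_avg_add (a b : nat -> C) (n j : nat) :
  window_avg (fun i => Cadd (a i) (b i)) n j = Cadd (window_avg a n j) (window_avg b n j).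
Proof. unfold window_avg; rewrite Csum_add; Ceq. Qed.

Lemma window_avg_scal (c : C) (a : nat -> C) (n j : nat) :
  window_avg (fun i => Cmul c (a i)) n j = Cmul c (window_avg a n j).
Proof. unfold window_avg; rewrite Csum_scal; Ceq. Qed.

Lemma window_avg_const (c : C) (n j : nat) : (0 < n)%nat -> window_avg (fun _ => c) n j = c.
Proof.
  intro Hn; apply lt_0_INR in Hn.
  unfold window_avg; rewrite Csum_const; apply C_ext; simpl; field; lra.
Qed.

Lemma window_avg_bound (a : nat -> C) (n j : nat) (M : R) :
  (0 < n)%nat -> (forall i, Cmod (a i) <= M) -> Cmod (window_avg a n j) <= M.
Proof.
  intros Hn Ha; apply lt_0_INR in Hn.
  unfold window_avg; rewrite Cmod_mul, Cmod_RtoC, Rabs_right by (left; apply Rinv_0_lt_compat, Hn).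
  pose proof (Csum_bound a j n M Ha) as Hs.
  apply (Rmult_le_compat_l (/ INR n)) in Hs; [|left; apply Rinv_0_lt_compat, Hn].
  rewrite <- Rmult_assoc, Rinv_l in Hs by lra; lra.
Qed.

Lemma window_avg_shift (a : nat -> C) (n j : nat) (M : R) :
  (0 < n)%nat -> (forall i, Cmod (a i) <= M) ->
  Cmod (Csub (window_avg (fun i => a (S i)) n j) (window_avg a n j)) <= 2 * M / INR n.
Proof.
  intros Hn Ha; apply lt_0_INR in Hn.
  assert (Hdiff : Cmod (Csub (a (n + j)%nat) (a j)) <= 2 * M).
  { eapply Rle_trans; [apply Cmod_triangle|]; rewrite Cmod_opp.
    pose proof (Ha (n + j)%nat); pose proof (Ha j); lra. }
  unfold window_avg; rewrite Csum_shift.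
  replace (Csub _ _) with (Cmul (RtoC (/ INR n)) (Csub (a (n + j)%nat) (a j))) by Ceq.
  rewrite Cmod_mul, Cmod_RtoC, Rabs_right by (left; apply Rinv_0_lt_compat, Hn).
  unfold Rdiv; rewrite (Rmult_comm (2 * M)).
  apply Rmult_le_compat_l; [left; apply Rinv_0_lt_compat, Hn | exact Hdiff].
Qed.

Record free_ultrafilter (U : (nat -> Prop) -> Prop) : Prop := {
  uf_mono : forall A B : nat -> Prop, U A -> (forall n, A n -> B n) -> U B ;
  uf_and : forall A B : nat -> Prop, U A -> U B -> U (fun n => A n /\ B n) ;
  uf_witness : forall A : nat -> Prop, U A -> exists n, A n ;
  uf_tail : forall N : nat, U (fun n => (N <= n)%nat) ;
  uf_ultra : forall A : nat -> Prop, U A \/ U (fun n => ~ A n)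
}.

(* Extend the Fréchet filter of tails to an ultrafilter (MathComp's
   ultrafilter lemma, a consequence of Zorn's lemma). *)
Lemma free_ultrafilter_exists : exists U, free_ultrafilter U.
Proof.
  destruct (filter.ultraFilterLemma filter.eventually_filter)
    as [U [HU Htail]].
  exists U; constructor.
  - intros A B HA AB; exact (filter.filterS AB HA).
  - intros A B; apply filter.filterI.
  - intros A HA; apply NNPP; intro Hno.
    apply (filter.filter_not_empty U).
    apply (filter.filterS (P := A)); [|exact HA].
    intros n Hn; apply Hno; exists n; exact Hn.
  - intro N; apply Htail; exists N; [exact I|].
    intros n Hn; exact (proj2 (Bool.reflect_iff _ _ ssrnat.leP) Hn).
  - intro A; apply filter.in_ultra_setVsetC, HU.
Qed.

Definition Cbounded (c : nat -> C) : Prop := exists M, forall k, Cmod (c k) <= M.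

Section Ultralimit.

Variable U : (nat -> Prop) -> Prop.
Hypothesis HU : free_ultrafilter U.

Definition ulim_to (c : nat -> C) (l : C) : Prop :=
  forall eps, 0 < eps -> U (fun k => Cmod (Csub (c k) l) < eps).

(* A bounded real sequence has a U-limit: the supremum of the reals r with
   r <= b k for U-many k. *)
Lemma real_ulim_exists (b : nat -> R) (M : R) :
  (forall k, Rabs (b k) <= M) ->
  exists r, forall eps, 0 < eps -> U (fun k => Rabs (b k - r) < eps).
Proof.
  intro Hb.
  assert (Hb' : forall k, - M <= b k <= M).
  { intro k; pose proof (Rle_abs (b k)); pose proof (Rle_abs (- b k)).
    rewrite Rabs_Ropp in *; specialize (Hb k); lra. }
  set (E := fun r => U (fun k => r <= b k)).
  assert (E_bound : bound E).
  { exists M; intros r Hr; destruct (uf_witness U HU _ Hr) as [k Hk].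
    specialize (Hb' k); lra. }
  assert (E_inhabited : exists r, E r).
  { exists (- M); apply (uf_mono U HU _ _ (uf_tail U HU 0)); intros k _; apply Hb'. }
  destruct (completeness E E_bound E_inhabited) as [s [s_ub s_lub]].
  exists s; intros eps Heps.
  assert (Above : U (fun k => s - eps < b k)).
  { destruct (classic (exists r, E r /\ s - eps < r)) as [[r [Hr Hlt]] | Hno].
    - apply (uf_mono U HU _ _ Hr); intros k Hk; lra.
    - exfalso; assert (s <= s - eps); [|lra].
      apply s_lub; intros r Hr; apply Rnot_lt_le; intro; apply Hno; exists r; auto. }
  assert (Below : U (fun k => b k < s + eps)).
  { destruct (uf_ultra U HU (fun k => s + eps / 2 <= b k)) as [H | H].
    - assert (s + eps / 2 <= s) by (apply s_ub; exact H); lra.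
    - apply (uf_mono U HU _ _ H); intros k Hk; apply Rnot_le_lt in Hk; lra. }
  apply (uf_mono U HU _ _ (uf_and U HU _ _ Above Below)); intros k [Hlo Hhi]; apply Rabs_def1; lra.
Qed.

Lemma ulim_to_exists (c : nat -> C) : Cbounded c -> exists l, ulim_to c l.
Proof.
  intros [M HM].
  destruct (real_ulim_exists (fun k => Cre (c k)) M) as [r1 H1].
  { intro k; eapply Rle_trans; [apply Cre_le | apply HM]. }
  destruct (real_ulim_exists (fun k => Cim (c k)) M) as [r2 H2].
  { intro k; eapply Rle_trans; [apply Cim_le | apply HM]. }
  exists (mkC r1 r2); intros eps Heps.
  apply (uf_mono U HU _ _ (uf_and U HU _ _ (H1 (eps / 2) ltac:(lra)) (H2 (eps / 2) ltac:(lra)))).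
  intros k [Hre Him]; eapply Rle_lt_trans; [apply Cmod_le_sum|]; simpl.
  unfold Rminus in Hre, Him; lra.
Qed.

(* U-limits are unique, since U contains no two disjoint sets. *)
Lemma ulim_to_unique (c : nat -> C) (l l' : C) : ulim_to c l -> ulim_to c l' -> l = l'.
Proof.
  intros H1 H2.
  assert (Hsmall : Cmod (Csub l l') <= 0).
  { apply Rnot_lt_le; intro Hpos; set (e := Cmod (Csub l l')) in Hpos.
    destruct (uf_witness U HU _ (uf_and U HU _ _ (H1 (e / 2) ltac:(lra)) (H2 (e / 2) ltac:(lra))))
      as [k [Hk1 Hk2]].
    assert (e <= Cmod (Csub l (c k)) + Cmod (Csub (c k) l')).
    { unfold e; replace (Csub l l') with (Cadd (Csub l (c k)) (Csub (c k) l')) by Ceq.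
      apply Cmod_triangle. }
    rewrite Cmod_sub_sym in Hk1; lra. }
  pose proof (Cmod_eq0 (Csub l l') ltac:(pose proof (Cmod_ge0 (Csub l l')); lra)) as E.
  apply C_ext; [apply (f_equal Cre) in E | apply (f_equal Cim) in E]; simpl in E; lra.
Qed.

Lemma ulim_to_add (c d : nat -> C) (l m : C) :
  ulim_to c l -> ulim_to d m -> ulim_to (fun k => Cadd (c k) (d k)) (Cadd l m).
Proof.
  intros H1 H2 eps Heps.
  apply (uf_mono U HU _ _ (uf_and U HU _ _ (H1 (eps / 2) ltac:(lra)) (H2 (eps / 2) ltac:(lra)))).
  intros k [Hk1 Hk2].
  replace (Csub _ _) with (Cadd (Csub (c k) l) (Csub (d k) m)) by Ceq.
  eapply Rle_lt_trans; [apply Cmod_triangle | lra].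
Qed.

Lemma ulim_to_scal (a : C) (c : nat -> C) (l : C) :
  ulim_to c l -> ulim_to (fun k => Cmul a (c k)) (Cmul a l).
Proof.
  intros H eps Heps; pose proof (Cmod_ge0 a) as Ha.
  assert (He : 0 < eps / (Cmod a + 1)) by (apply Rdiv_lt_0_compat; lra).
  apply (uf_mono U HU _ _ (H _ He)); intros k Hk.
  replace (Csub _ _) with (Cmul a (Csub (c k) l)) by Ceq.
  rewrite Cmod_mul; pose proof (Cmod_ge0 (Csub (c k) l)).
  assert (eps / (Cmod a + 1) * (Cmod a + 1) = eps) by (field; lra).
  nra.
Qed.

Lemma ulim_to_bound (c : nat -> C) (l : C) (M : R) :
  ulim_to c l -> (forall k, Cmod (c k) <= M) -> Cmod l <= M.
Proof.
  intros H Hc; apply Rnot_lt_le; intro Hlt.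
  destruct (uf_witness U HU _ (H (Cmod l - M) ltac:(lra))) as [k Hk].
  assert (Cmod l <= Cmod (c k) + Cmod (Csub l (c k))).
  { replace l with (Cadd (c k) (Csub l (c k))) at 1 by Ceq; apply Cmod_triangle. }
  rewrite Cmod_sub_sym in Hk; specialize (Hc k); lra.
Qed.

(* Sequences whose difference tends to zero have the same U-limit, since U is free. *)
Lemma ulim_to_asymp (c d : nat -> C) (l : C) :
  ulim_to c l ->
  (forall eps, 0 < eps -> exists N, forall k, (N <= k)%nat -> Cmod (Csub (d k) (c k)) < eps) ->
  ulim_to d l.
Proof.
  intros H Hdc eps Heps; destruct (Hdc (eps / 2) ltac:(lra)) as [N HN].
  apply (uf_mono U HU _ _ (uf_and U HU _ _ (H (eps / 2) ltac:(lra)) (uf_tail U HU N))).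
  intros k [Hk HNk]; specialize (HN k HNk).
  replace (Csub (d k) l) with (Cadd (Csub (d k) (c k)) (Csub (c k) l)) by Ceq.
  eapply Rle_lt_trans; [apply Cmod_triangle | lra].
Qed.

Lemma ulim_to_const (a : C) : ulim_to (fun _ => a) a.
Proof.
  intros eps Heps; apply (uf_mono U HU _ _ (uf_tail U HU 0)); intros k _.
  replace (Csub a a) with (RtoC 0) by Ceq; rewrite Cmod_RtoC, Rabs_R0; exact Heps.
Qed.

(* The U-limit of a sequence, chosen by Hilbert's epsilon; it is meaningful for
   bounded sequences. *)
Definition ulim (c : nat -> C) : C := epsilon (inhabits C0) (ulim_to c).

Lemma ulim_spec (c : nat -> C) : Cbounded c -> ulim_to c (ulim c).
Proof. intro Hc; unfold ulim; apply epsilon_spec, ulim_to_exists, Hc. Qed.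

Lemma ulim_eq (c : nat -> C) (l : C) : ulim_to c l -> ulim c = l.
Proof.
  intro H; apply (ulim_to_unique c); [unfold ulim; apply epsilon_spec; exists l |]; exact H.
Qed.

Lemma ulim_add (c d : nat -> C) :
  Cbounded c -> Cbounded d -> ulim (fun k => Cadd (c k) (d k)) = Cadd (ulim c) (ulim d).
Proof. intros Hc Hd; apply ulim_eq, ulim_to_add; apply ulim_spec; assumption. Qed.

Lemma ulim_scal (a : C) (c : nat -> C) :
  Cbounded c -> ulim (fun k => Cmul a (c k)) = Cmul a (ulim c).
Proof. intro Hc; apply ulim_eq, ulim_to_scal, ulim_spec, Hc. Qed.

Lemma ulim_bound (c : nat -> C) (M : R) : (forall k, Cmod (c k) <= M) -> Cmod (ulim c) <= M.
Proof. intro Hc; apply (ulim_to_bound c); [apply ulim_spec; exists M |]; exact Hc. Qed.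

Lemma ulim_asymp (c d : nat -> C) :
  Cbounded c ->
  (forall eps, 0 < eps -> exists N, forall k, (N <= k)%nat -> Cmod (Csub (d k) (c k)) < eps) ->
  ulim d = ulim c.
Proof. intros Hc Hdc; apply ulim_eq, (ulim_to_asymp c), Hdc; apply ulim_spec, Hc. Qed.

Lemma ulim_const (a : C) : ulim (fun _ => a) = a.
Proof. apply ulim_eq, ulim_to_const. Qed.

Lemma ulim_apart (c : nat -> C) (l : C) (eps : R) :
  Cbounded c -> 0 < eps -> (forall k, eps < Cmod (Csub (c k) l)) -> ulim c <> l.
Proof.
  intros Hc Heps Hfar E; rewrite <- E in Hfar.
  destruct (uf_witness U HU _ (ulim_spec c Hc eps Heps)) as [k Hk].
  specialize (Hfar k); lra.
Qed.

End Ultralimit.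

Section WindowBanachLimit.

Variable V : CNormedSpace.
Variable f : V -> C.
Hypothesis f_add : forall u w, f (vadd u w) = Cadd (f u) (f w).
Hypothesis f_scal : forall a u, f (vscal a u) = Cmul a (f u).
Variable K : R.
Hypothesis K_pos : 0 < K.
Hypothesis f_bound : forall u, Cmod (f u) <= K * vnorm u.
Variables nk jk : nat -> nat.
Hypothesis nk_pos : forall k, (0 < nk k)%nat.
Hypothesis nk_large : forall k, (k <= nk k)%nat.
Variable U : (nat -> Prop) -> Prop.
Hypothesis HU : free_ultrafilter U.

Definition window_avgs (y : seqV V) (k : nat) : C :=
  window_avg (fun n => f (y n)) (nk k) (jk k).

(* The candidate Banach limit: the U-limit of the window averages, scaled by 1/K
   so that its norm is at most 1. *)
Definition window_limit (y : seqV V) : C := Cmul (RtoC (/ K)) (ulim U (window_avgs y)).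

Lemma window_avgs_bound (y : seqV V) (M : R) :
  sup_norm_le V y M -> forall k, Cmod (window_avgs y k) <= K * M.
Proof.
  intros Hy k; apply window_avg_bound; [apply nk_pos|]; intro n.
  eapply Rle_trans; [apply f_bound | apply Rmult_le_compat_l; [lra | apply Hy]].
Qed.

Lemma window_avgs_bounded (y : seqV V) : bounded_seq V y -> Cbounded (window_avgs y).
Proof. intros [M HM]; exists (K * M); exact (window_avgs_bound y M HM). Qed.

Lemma window_avgs_add (y z : seqV V) :
  window_avgs (seq_add V y z) = fun k => Cadd (window_avgs y k) (window_avgs z k).
Proof.
  apply functional_extensionality; intro k; unfold window_avgs, seq_add.
  rewrite <- window_avg_add; f_equal; apply functional_extensionality; intro n; apply f_add.
Qed.

Lemma window_avgs_scal (a : C) (y : seqV V) :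
  window_avgs (seq_scal V a y) = fun k => Cmul a (window_avgs y k).
Proof.
  apply functional_extensionality; intro k; unfold window_avgs, seq_scal.
  rewrite <- window_avg_scal; f_equal; apply functional_extensionality; intro n; apply f_scal.
Qed.

Lemma window_avgs_const (v : V) : window_avgs (const_seq V v) = fun _ => f v.
Proof.
  apply functional_extensionality; intro k; unfold window_avgs, const_seq.
  apply window_avg_const, nk_pos.
Qed.

(* Shifting y changes the k-th average by at most 2KM / nk k, which tends to 0. *)
Lemma window_avgs_shift (y : seqV V) (M : R) :
  sup_norm_le V y M ->
  forall eps, 0 < eps -> exists N, forall k, (N <= k)%nat ->
    Cmod (Csub (window_avgs (shift V y) k) (window_avgs y k)) < eps.
Proof.
  intros Hy eps Heps.
  assert (HM : 0 <= M) by (eapply Rle_trans; [apply (vnorm_nonneg V (y 0%nat)) | apply Hy]).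
  destruct (INR_unbounded (2 * (K * M) / eps)) as [N HN].
  exists N; intros k Hk.
  assert (Hn : INR N <= INR (nk k)) by (apply le_INR; specialize (nk_large k); lia).
  assert (Hpos : 0 < INR (nk k)) by (apply lt_0_INR, nk_pos).
  eapply Rle_lt_trans.
  - apply (window_avg_shift (fun n => f (y n))); [apply nk_pos|].
    intro n; eapply Rle_trans; [apply f_bound | apply Rmult_le_compat_l; [lra | apply Hy]].
  - unfold Rdiv; apply (Rmult_lt_reg_r (INR (nk k))); [exact Hpos|].
    rewrite Rmult_assoc, Rinv_l, Rmult_1_r by lra.
    assert (2 * (K * M) / eps * eps = 2 * (K * M)) by (field; lra).
    nra.
Qed.

Theorem window_limit_banach : banach_limit_functional V window_limit.
Proof.
  unfold window_limit; split; [|split; [|split]].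
  - intros y z Hy Hz; rewrite window_avgs_add, (ulim_add U HU) by (apply window_avgs_bounded; assumption).
    Ceq.
  - intros a y Hy; rewrite window_avgs_scal, (ulim_scal U HU) by (apply window_avgs_bounded; assumption).
    Ceq.
  - intros y M HM.
    rewrite Cmod_mul, Cmod_RtoC, Rabs_right by (left; apply Rinv_0_lt_compat, K_pos).
    pose proof (ulim_bound U HU _ _ (window_avgs_bound y M HM)) as Hb.
    apply (Rmult_le_compat_l (/ K)) in Hb; [|left; apply Rinv_0_lt_compat, K_pos].
    rewrite <- Rmult_assoc, Rinv_l in Hb by lra; lra.
  - intros y [M HM]; f_equal.
    apply (ulim_asymp U HU); [apply window_avgs_bounded; exists M; exact HM |].
    apply (window_avgs_shift y M HM).
Qed.

End WindowBanachLimit.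

Lemma long_bad_windows (a : nat -> C) (l : C) (eps : R) :
  ~ (exists N, forall n, (N <= n)%nat -> (0 < n)%nat ->
       forall j, Cmod (Csub (window_avg a n j) l) <= eps) ->
  exists nk jk : nat -> nat, forall k,
    (0 < nk k)%nat /\ (k <= nk k)%nat /\ eps < Cmod (Csub (window_avg a (nk k) (jk k)) l).
Proof.
  intro Hfail.
  assert (Hbad : forall k, exists w : nat * nat,
    (0 < fst w)%nat /\ (k <= fst w)%nat /\ eps < Cmod (Csub (window_avg a (fst w) (snd w)) l)).
  { intro k; apply NNPP; intro Hno; apply Hfail; exists k; intros n Hkn Hn j.
    apply Rnot_lt_le; intro Hlt; apply Hno; exists (n, j); auto. }
  destruct (choice _ Hbad) as [w Hw].
  exists (fun k => fst (w k)), (fun k => snd (w k)); exact Hw.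
Qed.

Theorem mainTheorem18 (V : CNormedSpace) (x : seqV V) (v : V) :
  bounded_seq V x ->
  strongly_almost_convergent V x v ->
  weakly_almost_convergent V x v.
Proof.
  intros Hx Hsac f [f_add [f_scal [K0 HK0]]].
  set (K := Rmax K0 1).
  assert (K_pos : 0 < K) by (apply Rlt_le_trans with 1; [lra | apply Rmax_r]).
  assert (f_bound : forall u, Cmod (f u) <= K * vnorm u).
  { intro u; eapply Rle_trans; [apply HK0|].
    apply Rmult_le_compat_r; [apply vnorm_nonneg | apply Rmax_l]. }
  destruct Hx as [M HM].
  split.
  { exists (K * M); intro n; eapply Rle_trans; [apply f_bound|].
    apply Rmult_le_compat_l; [lra | apply HM]. }
  intros eps Heps; apply NNPP; intro Hfail.
  destruct (long_bad_windows _ (f v) eps Hfail) as [nk [jk Hbad]].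
  assert (nk_pos : forall k, (0 < nk k)%nat) by apply Hbad.
  assert (nk_large : forall k, (k <= nk k)%nat) by apply Hbad.
  destruct free_ultrafilter_exists as [U HU].
  pose proof (Hsac _ (window_limit_banach V f f_add f_scal K K_pos f_bound
                        nk jk nk_pos nk_large U HU)) as E.
  unfold window_limit in E; apply Cmul_cancel in E; [|apply Rinv_neq_0_compat; lra].
  rewrite (window_avgs_const V f nk jk nk_pos), (ulim_const U HU) in E.
  apply (ulim_apart U HU (window_avgs V f nk jk x) (f v) eps); [| exact Heps | apply Hbad | exact E].
  apply (window_avgs_bounded V f K K_pos f_bound nk jk nk_pos); exists M; exact HM.
Qed.
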